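(* Let $\beta \in \mathcal{P}$ and $\alpha \in E$ satisfy $\alpha^{q+1} = \beta^q + \beta^{q^2+q+1}$. Then the equation $X^{q+1} + \alpha X + \beta = 0$ has $q+1$ roots in $E$, and all of them lie in $\mathcal{P}$.
   Context: Let $q = 2^m$ with $m \ge 1$, and let $E = \mathbb{F}_{q^4}$. Define $\mathcal{P} = \{x \in E \mid x^{q^3+q^2+q+1} = 1\}$. *)

From HB Require Import structures.
From mathcomp Require Import all_boot all_order all_algebra all_field.
Set Implicit Arguments. Unset Strict Implicit. Unset Printing Implicit Defensive.
Import GRing.Theory.
Local Open Scope ring_scope.

Definition Pset (E : finFieldType) (q : nat) : {set E} :=
  [set x : E | x ^+ (q ^ 3 + q ^ 2 + q + 1)%N == 1].

Definition rootsE (E : finFieldType) (q : nat) (a b : E) : {set E} :=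
  [set x : E | x ^+ q.+1 + a * x + b == 0].

(* Put L(z) = z^{q^2} + alpha z^q + beta z.  For z <> 0 and x = z^{q-1} one has
   L(z) = z (x^{q+1} + alpha x + beta), so the (q-1)-th powers of the nonzero
   zeros of L are roots of the trinomial.  The hypotheses on alpha and beta give
   a q-linearized Q with Q(L(z)) = z^{q^4} - z = 0, so the additive map L has an
   image of size at most q^2, hence a kernel of size at least q^2, whose nonzero
   elements have at least (q^2 - 1)/(q - 1) = q + 1 distinct (q-1)-th powers.
   The trinomial has at most q + 1 roots, so these are all of them, and they lie
   in P because (q - 1)(q^3 + q^2 + q + 1) = q^4 - 1. *)

From HB Require Import structures.
From mathcomp Require Import all_boot all_order all_algebra all_field.
From mathcomp Require Import ring zify.

Set Implicit Arguments.
Unset Strict Implicit.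
Unset Printing Implicit Defensive.
Import GRing.Theory.
Local Open Scope ring_scope.

Lemma card_roots_trinomial (F : finFieldType) n k j (a b : F) :
  (k < n)%N -> (j < n)%N ->
  leq #|[set x : F | x ^+ n + a * x ^+ k + b * x ^+ j == 0]| n.
Proof.
move=> lt_kn lt_jn; set p : {poly F} := 'X^n + a *: 'X^k + b *: 'X^j.
have size_p : size p = n.+1.
  rewrite /p -addrA size_polyDl size_polyXn //.
  apply: leq_ltn_trans (size_polyD _ _) _; rewrite gtn_max.
  by rewrite !(leq_ltn_trans (size_scale_leq _ _)) // size_polyXn ltnS.
have p_neq0 : p != 0 by rewrite -size_poly_eq0 size_p.
rewrite cardE -ltnS -size_p; apply: max_poly_roots p_neq0 _ (enum_uniq _).
by apply/allP => x; rewrite mem_enum inE rootE /p !hornerE.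
Qed.

Lemma leq_card_imset_fibers (T U : finType) (f : T -> U) (A : {set T}) k :
  {in A, forall x, #|[set y | f y == f x]| <= k}%N -> (#|A| <= #|f @: A| * k)%N.
Proof.
move=> fiberA; rewrite -sum1_card (partition_big_imset f) /= -sum_nat_const.
apply: leq_sum => _ /imsetP[x Ax ->]; rewrite sum1_card.
apply: leq_trans (fiberA x Ax); apply: subset_leq_card.
by apply/subsetP => y; rewrite !inE => /andP[].
Qed.

Lemma card_fiber_additive (G H : finZmodType) (f : G -> H) :
  {morph f : x y / x + y} ->
  forall x, leq #|[set y | f y == f x]| #|[set z | f z == 0]|.
Proof.
move=> fD x; apply: leq_trans (leq_imset_card (+%R^~ x) _); apply: subset_leq_card.
apply/subsetP => y; rewrite inE => /eqP fy; apply/imsetP; exists (y - x); last first.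
  by rewrite subrK.
have fB : f (y - x) + f x = f y by rewrite -fD subrK.
by rewrite inE; apply/eqP/(addIr (f x)); rewrite fB fy add0r.
Qed.

Lemma card_fiber_expr (F : finFieldType) n (x : F) :
  x != 0 -> leq #|[set y : F | y ^+ n == x ^+ n]| #|[set c : F | c ^+ n == 1]|.
Proof.
move=> x_neq0; apply: leq_trans (leq_imset_card ( *%R^~ x) _); apply: subset_leq_card.
apply/subsetP => y; rewrite inE => /eqP yx; apply/imsetP; exists (y / x).
  by rewrite inE expr_div_n yx divff // expf_neq0.
by rewrite divfK.
Qed.

Lemma expr_expn_iter (R : pzSemiRingType) (x : R) p n :
  x ^+ (p ^ n) = iter n (fun y => y ^+ p) x.
Proof. by elim: n => [|n IHn]; rewrite ?expr1 // expnSr exprM IHn. Qed.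

Section QLinearizedTrinomial.

Variables (F : finFieldType) (q : nat).
Hypotheses (q_gt1 : (1 < q)%N) (char2 : 2 \in [pchar F]) (cardF : #|F| = (q ^ 4)%N).
Hypothesis frobD : forall x y : F, (x + y) ^+ q = x ^+ q + y ^+ q.

Lemma frob4_id (x : F) : (((x ^+ q) ^+ q) ^+ q) ^+ q = x.
Proof. by rewrite -[RHS]expf_card cardF expr_expn_iter. Qed.

Lemma expr_subn1_Pset (z : F) : z != 0 -> z ^+ (q - 1) \in Pset F q.
Proof.
move=> z_neq0; rewrite inE -exprM; apply/eqP/(mulfI z_neq0).
rewrite mulr1 -exprS.
have -> : ((q - 1) * (q ^ 3 + q ^ 2 + q + 1)).+1 = #|F|.
  by rewrite cardF; case: q q_gt1 => // n _; rewrite subn1 /=; nia.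
exact: expf_card.
Qed.

Variables alpha beta : F.
Hypotheses (beta_in_P : beta \in Pset F q)
  (alphaE : alpha ^+ q.+1 = beta ^+ q + beta ^+ (q ^ 2 + q + 1)).

Definition qlin_trinomial (z : F) := (z ^+ q) ^+ q + alpha * z ^+ q + beta * z.

Lemma qlin_trinomialD : {morph qlin_trinomial : x y / x + y}.
Proof. by move=> x y; rewrite /qlin_trinomial !frobD; ring. Qed.

Lemma beta_norm : beta * beta ^+ q * (beta ^+ q) ^+ q * ((beta ^+ q) ^+ q) ^+ q = 1.
Proof.
move: beta_in_P; rewrite inE => /eqP <-.
by rewrite !exprD expr1 !expr_expn_iter /=; ring.
Qed.

Lemma alpha_norm : alpha * alpha ^+ q = beta ^+ q + beta * beta ^+ q * (beta ^+ q) ^+ q.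
Proof. by rewrite -exprS alphaE !exprD expr1 expr_expn_iter /=; ring. Qed.

(* Chosen so that in Q(L(z)) the terms in z^{q^3} and z^{q^2} cancel; those in
   z^q and z then have coefficients 0 and 1 by [alpha_norm] and [beta_norm], and
   Q(L(z)) = z^{q^4} + z = 0 in characteristic 2. *)
Definition qlin_annihilator (u : F) :=
  (u ^+ q) ^+ q - (alpha ^+ q) ^+ q * u ^+ q
  + ((alpha ^+ q) ^+ q * alpha ^+ q - (beta ^+ q) ^+ q) * u.

Lemma qlin_annihilator_qlin_trinomial z : qlin_annihilator (qlin_trinomial z) = 0.
Proof.
rewrite /qlin_annihilator /qlin_trinomial !frobD !exprMn frob4_id.
have alpha_norm_q := congr1 (fun x => x ^+ q) alpha_norm.
rewrite /= exprMn frobD !exprMn in alpha_norm_q.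
have norm_alpha := alpha_norm; have norm_beta := beta_norm.
set A1 := alpha ^+ q in norm_alpha alpha_norm_q *.
set A2 := A1 ^+ q in alpha_norm_q *.
set B1 := beta ^+ q in norm_alpha alpha_norm_q norm_beta *.
set B2 := B1 ^+ q in norm_alpha alpha_norm_q norm_beta *.
set B3 := B2 ^+ q in alpha_norm_q norm_beta *.
have c0_beta : (A2 * A1 - B2) * beta = 1.
  by rewrite (mulrC A2) alpha_norm_q -norm_beta; ring.
have coef_q : alpha * A1 * A2 - alpha * B2 - A2 * B1 = 0.
  have [A1_eq0|A1_neq0] := eqVneq A1 0.
    have alpha0 : alpha = 0 by move/eqP: A1_eq0; rewrite expf_eq0 => /andP[_ /eqP].
    by rewrite /A2 A1_eq0 expr0n gtn_eqF ?(ltnW q_gt1) // alpha0 !(mul0r, mulr0) !subr0.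
  apply: (mulfI A1_neq0); rewrite mulr0.
  transitivity ((alpha * A1) * (A1 * A2) - (alpha * A1) * B2 - (A1 * A2) * B1).
    by ring.
  rewrite norm_alpha alpha_norm_q.
  transitivity (B1 * B2 * (beta * B1 * B2 * B3) - B1 * B2); first by ring.
  by rewrite norm_beta mulr1 subrr.
transitivity (z + (alpha * A1 * A2 - alpha * B2 - A2 * B1) * z ^+ q
   + ((A2 * A1 - B2) * beta) * z); first by ring.
by rewrite coef_q c0_beta mul0r addr0 mul1r addrr_pchar2.
Qed.

Lemma card_qlin_trinomial_image : leq #|qlin_trinomial @: [set: F]| (q ^ 2).
Proof.
have lt_q_q2 : (q < q ^ 2)%N by rewrite -{1}(expn1 q) ltn_exp2l.
apply: leq_trans (subset_leq_card _) (card_roots_trinomial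
  (- (alpha ^+ q) ^+ q) ((alpha ^+ q) ^+ q * alpha ^+ q - (beta ^+ q) ^+ q)
  lt_q_q2 (ltn_trans q_gt1 lt_q_q2)).
apply/subsetP => _ /imsetP[z _ ->]; rewrite inE (expr_expn_iter _ q 2) expr1 mulNr.
by apply/eqP; exact: qlin_annihilator_qlin_trinomial.
Qed.

Definition qlin_kernel := [set z | qlin_trinomial z == 0].

Lemma card_qlin_kernel : leq (q ^ 2) #|qlin_kernel|.
Proof.
have := leq_card_imset_fibers (A := [set: F]) (fun x _ => card_fiber_additive qlin_trinomialD x).
rewrite cardsT cardF => /leq_trans/(_ (leq_mul card_qlin_trinomial_image (leqnn _))).
by rewrite (expnD q 2 2) leq_pmul2l ?expn_gt0 ?(ltnW q_gt1).
Qed.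

Lemma qlin_kernel_expr_rootsE z :
  z \in qlin_kernel :\ 0 -> z ^+ (q - 1) \in rootsE q alpha beta.
Proof.
rewrite !inE => /andP[z_neq0 /eqP Lz0]; apply/eqP/(mulfI z_neq0).
have zq : z ^+ q = z * z ^+ (q - 1) by rewrite -exprS subn1 prednK // ltnW.
have zq2 : (z ^+ q) ^+ q = z * (z ^+ (q - 1)) ^+ q.+1.
  rewrite -!exprM -exprS; congr (z ^+ _).
  by case: q q_gt1 => // n _; rewrite subn1 /=; nia.
by rewrite mulr0 -[RHS]Lz0 /qlin_trinomial zq2 zq; ring.
Qed.

Definition qlin_kernel_powers := [set z ^+ (q - 1) | z in qlin_kernel :\ 0].

Lemma card_qlin_kernel_powers : leq q.+1 #|qlin_kernel_powers|.
Proof.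
have q1_gt0 : (0 < q - 1)%N by rewrite subn_gt0.
have card_unity : leq #|[set c : F | c ^+ (q - 1) == 1]| (q - 1).
  apply: leq_trans (subset_leq_card _) (card_roots_trinomial 0 (-1) q1_gt0 q1_gt0).
  by apply/subsetP => c; rewrite !inE mul0r addr0 mulN1r expr0 subr_eq0.
have fibers : {in qlin_kernel :\ 0, forall z,
    leq #|[set y | y ^+ (q - 1) == z ^+ (q - 1)]| #|[set c : F | c ^+ (q - 1) == 1]|}.
  by move=> z; rewrite in_setD1 => /andP[z_neq0 _]; apply: card_fiber_expr.
have le_kernel := leq_trans (leq_card_imset_fibers fibers) (leq_mul (leqnn _) card_unity).
rewrite -(leq_pmul2r q1_gt0); apply: leq_trans le_kernel.
have := card_qlin_kernel; rewrite (cardsD1 0).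
by move: #|_ :\ _| (leq_b1 (0 \in qlin_kernel)) => k; nia.
Qed.

Lemma card_rootsE_le : leq #|rootsE q alpha beta| q.+1.
Proof.
have lt_1_q1 : (1 < q.+1)%N by rewrite ltnS ltnW.
apply: leq_trans (subset_leq_card _) (card_roots_trinomial alpha beta lt_1_q1 (ltn0Sn q)).
by apply/subsetP => x; rewrite !inE expr1 expr0 mulr1.
Qed.

Lemma rootsE_qlin_kernel_powers : rootsE q alpha beta = qlin_kernel_powers.
Proof.
apply/esym/eqP; rewrite eqEcard (leq_trans card_rootsE_le card_qlin_kernel_powers) andbT.
by apply/subsetP => _ /imsetP[z z_in ->]; apply: qlin_kernel_expr_rootsE.
Qed.

Lemma card_rootsE : #|rootsE q alpha beta| = q.+1.
Proof.
apply/anti_leq; rewrite card_rootsE_le rootsE_qlin_kernel_powers.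
exact: card_qlin_kernel_powers.
Qed.

Lemma rootsE_sub_Pset : rootsE q alpha beta \subset Pset F q.
Proof.
rewrite rootsE_qlin_kernel_powers.
by apply/subsetP => _ /imsetP[z /setD1P[z_neq0 _] ->]; apply: expr_subn1_Pset.
Qed.

End QLinearizedTrinomial.

Theorem lemma2p3 (m : nat) (E : finFieldType) (q : nat) (alpha beta : E) :
  (1 <= m)%N -> q = (2 ^ m)%N -> #|E| = (q ^ 4)%N ->
  beta \in Pset E q ->
  alpha ^+ q.+1 = beta ^+ q + beta ^+ (q ^ 2 + q + 1)%N ->
  #|rootsE q alpha beta| = q.+1 /\ rootsE q alpha beta \subset Pset E q.
Proof.
move=> m_gt0 qE cardE beta_in_P alphaE.
have q_gt1 : (1 < q)%N by rewrite qE -{1}(expn0 2) ltn_exp2l.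
have char2 : 2 \in [pchar E].
  by apply: (card_finPcharP (n := (m * 4)%N)); rewrite // cardE qE expnM.
have frobD (x y : E) : (x + y) ^+ q = x ^+ q + y ^+ q.
  by rewrite exprDn_pchar // (eq_pnat _ (pcharf_eq char2)) qE pnatX pnat_id.
by split; [apply: card_rootsE | apply: rootsE_sub_Pset].
Qed.
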